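(* Let $\mu>0$, $\beta\in[0,1]$, $x_0\in\mathbb R^n$, and $f\in\mathcal S^2_{\mu,L}(\mathbb R^n)$ for some $L\ge\mu$. For $s>0$ let $X_s$ be the solution of the $\beta$-High Resolution ODE $$\ddot X_s+2\sqrt\mu\,\dot X_s+\beta\sqrt s\,\nabla^2 f(X_s)\dot X_s+(1+\sqrt{\mu s})\nabla f(X_s)=0,\quad X_s(0)=x_0,\ \dot X_s(0)=-\frac{2\sqrt s\,\nabla f(x_0)}{1+\sqrt{\mu s}},$$ and let $X$ be the solution of the low-resolution ODE $$\ddot X+2\sqrt\mu\,\dot X+\nabla f(X)=0,\quad X(0)=x_0,\ \dot X(0)=0.$$ Then for every $T>0$, $$\lim_{s\to 0}\max_{0\le t\le T}\|X_s(t)-X(t)\|=0.$$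
   Context: $\mathcal S^2_{\mu,L}(\mathbb R^n)$ is the class of twice differentiable, $\mu$-strongly convex functions $f:\mathbb R^n\to\mathbb R$ (i.e. $f(y)\ge f(x)+\langle\nabla f(x),y-x\rangle+\frac\mu2\|y-x\|^2$) whose gradient is $L$-Lipschitz and whose Hessian is Lipschitz in Frobenius norm ($\|\nabla^2f(x)-\nabla^2f(y)\|_F\le L'\|x-y\|$ for some $L'>0$), with $0<\mu\le L$. *)

From HB Require Import structures.
From mathcomp Require Import all_boot all_order all_algebra.
From mathcomp Require Import all_classical all_reals all_analysis.
Set Implicit Arguments. Unset Strict Implicit. Unset Printing Implicit Defensive.
Import Order.TTheory GRing.Theory Num.Theory.
Import numFieldNormedType.Exports.
Local Open Scope classical_set_scope.
Local Open Scope ring_scope.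

Section Defs.
Variables (R : realType) (n : nat).

(* Euclidean inner product and norm on R^n (the library's norm on matrices is
   the sup norm, so we fix the Euclidean one explicitly). *)
Definition inner (u v : 'rV[R]_n) : R := \sum_(i < n) u 0 i * v 0 i.
Definition enorm (v : 'rV[R]_n) : R := Num.sqrt (\sum_(i < n) v 0 i ^+ 2).
Definition frob (A : 'M[R]_n) : R :=
  Num.sqrt (\sum_(i < n) \sum_(j < n) A i j ^+ 2).

Definition ebasis (i : 'I_n) : 'rV[R]_n := delta_mx 0 i.

Definition grad (f : 'rV[R]_n -> R) (x : 'rV[R]_n) : 'rV[R]_n :=
  \row_i ('D_(ebasis i) f x).

Definition hess (f : 'rV[R]_n -> R) (x : 'rV[R]_n) : 'M[R]_n :=
  \matrix_(i, j) (('D_(ebasis j) (grad f) x) 0 i).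

Definition S2 (mu L : R) (f : 'rV[R]_n -> R) : Prop :=
  [/\ (forall x, differentiable f x),
      (forall x, differentiable (grad f) x),
      (forall x y, f x + inner (grad f x) (y - x) + mu / 2 * enorm (y - x) ^+ 2
                   <= f y),
      (forall x y, enorm (grad f x - grad f y) <= L * enorm (x - y)) &
      (exists L', 0 < L' /\
         forall x y, frob (hess f x - hess f y) <= L' * enorm (x - y))].

End Defs.

From HB Require Import structures.
From mathcomp Require Import all_boot all_order all_algebra.
From mathcomp Require Import all_classical all_reals all_analysis.
From mathcomp Require Import lra ring.
Import Order.TTheory GRing.Theory Num.Theory.
Import numFieldNormedType.Exports.
Local Open Scope classical_set_scope.
Local Open Scope ring_scope.

Set Implicit Arguments. Unset Strict Implicit. Unset Printing Implicit Defensive.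

(* Let e = X_s - X and d = X_s' - X'.  Subtracting the two equations gives
   d' = - 2 sqrt mu d - (grad f(X_s) - grad f(X))
        - sqrt s (beta hess f(X_s) X_s' + sqrt mu grad f(X_s)),
   where the Hessian entries are bounded by L because grad f is L-Lipschitz,
   and X', grad f(X) are bounded on [0, T] by compactness.  Hence the energy
   phi = |e|^2 + |d|^2 satisfies phi' <= A phi + s K with A, K independent of
   s, while phi(0) = |X_s'(0)|^2 <= 4 s |grad f(x0)|^2.  Gronwall's inequality
   gives |X_s(t) - X(t)|^2 <= phi(t) <= s M uniformly on [0, T]. *)

Section SquaredNorm.
Variables (R : realType) (n : nat).
Implicit Types (u v : 'rV[R]_n) (k : R).

Definition sqenorm v : R := \sum_(i < n) v 0 i ^+ 2.

Lemma sqenorm_ge0 v : 0 <= sqenorm v.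
Proof. by apply: sumr_ge0 => i _; exact: sqr_ge0. Qed.

Lemma enorm_sqr v : enorm v ^+ 2 = sqenorm v.
Proof. exact: sqr_sqrtr (sqenorm_ge0 v). Qed.

Lemma sqenorm0 : sqenorm 0 = 0.
Proof. by rewrite /sqenorm big1 // => i _; rewrite mxE expr0n. Qed.

Lemma sqenormZ k v : sqenorm (k *: v) = k ^+ 2 * sqenorm v.
Proof.
by rewrite /sqenorm mulr_sumr; apply: eq_bigr => i _; rewrite mxE exprMn.
Qed.

Lemma sqenormN v : sqenorm (- v) = sqenorm v.
Proof. by rewrite -scaleN1r sqenormZ sqrrN expr1n mul1r. Qed.

Lemma sqenormD_le u v : sqenorm (u + v) <= 2 * sqenorm u + 2 * sqenorm v.
Proof.
rewrite /sqenorm !mulr_sumr -big_split /=; apply: ler_sum => i _.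
rewrite mxE; have := sqr_ge0 (u 0 i - v 0 i); nra.
Qed.

Lemma dbl_inner_le u v : 2 * inner u v <= sqenorm u + sqenorm v.
Proof.
rewrite /inner /sqenorm mulr_sumr -big_split /=; apply: ler_sum => i _.
have := sqr_ge0 (u 0 i - v 0 i); nra.
Qed.

Lemma enormZ k v : enorm (k *: v) = `|k| * enorm v.
Proof. by rewrite /enorm -/(sqenorm _) sqenormZ sqrtrM ?sqr_ge0 // sqrtr_sqr. Qed.

Lemma normr_coord_le_enorm v i : `|v 0 i| <= enorm v.
Proof.
rewrite -sqrtr_sqr; apply: ler_wsqrtr.
by rewrite /sqenorm (bigD1 i) //= lerDl; apply: sumr_ge0 => j _; exact: sqr_ge0.
Qed.

Lemma enorm_ebasis (i : 'I_n) : enorm (ebasis R i) = 1.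
Proof.
rewrite /enorm (bigD1 i) //= big1 ?addr0 /ebasis ?mxE ?eqxx ?expr1n ?sqrtr1 //.
by move=> j ji; rewrite mxE (negbTE ji) andbF expr0n.
Qed.

Lemma sqenorm_le_of_enorm_le (L : R) u v : 0 <= L ->
  enorm u <= L * enorm v -> sqenorm u <= L ^+ 2 * sqenorm v.
Proof.
move=> L_ge0 uv; rewrite -!enorm_sqr -exprMn ler_sqr // nnegrE ?sqrtr_ge0 //.
exact: mulr_ge0 (sqrtr_ge0 _).
Qed.

Lemma cauchy_schwarz_sum (a b : 'I_n -> R) :
  (\sum_i a i * b i) ^+ 2 <= (\sum_i a i ^+ 2) * (\sum_i b i ^+ 2).
Proof.
pose P i j := a i ^+ 2 * b j ^+ 2.
pose Q i j := a i * b i * (a j * b j).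
have eP : (\sum_i a i ^+ 2) * (\sum_i b i ^+ 2) = \sum_i \sum_j P i j.
  by rewrite mulr_suml; apply: eq_bigr => i _; rewrite mulr_sumr.
have eQ : (\sum_i a i * b i) ^+ 2 = \sum_i \sum_j Q i j.
  by rewrite expr2 mulr_suml; apply: eq_bigr => i _; rewrite mulr_sumr.
have sym : \sum_i \sum_j (P i j + P j i) = 2 * \sum_i \sum_j P i j.
  rewrite (eq_bigr (fun i => \sum_j P i j + \sum_j P j i)) => [|i _]; last first.
    by rewrite big_split.
  by rewrite big_split /= [X in _ + X]exchange_big /= mulr2n mulrDl mul1r.
have dbl : \sum_i \sum_j (Q i j + Q i j) = 2 * \sum_i \sum_j Q i j.
  rewrite (eq_bigr (fun i => \sum_j Q i j + \sum_j Q i j)) => [|i _]; last first.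
    by rewrite big_split.
  by rewrite big_split /= mulr2n mulrDl mul1r.
have : \sum_i \sum_j (Q i j + Q i j) <= \sum_i \sum_j (P i j + P j i).
  apply: ler_sum => i _; apply: ler_sum => j _; rewrite /P /Q.
  have := sqr_ge0 (a i * b j - a j * b i); nra.
rewrite sym dbl eP eQ; lra.
Qed.

Lemma sqenorm_mulmx_tr_le v (M : 'M[R]_n) (c : R) : (forall i j, `|M i j| <= c) ->
  sqenorm (v *m M^T) <= (n%:R * c) ^+ 2 * sqenorm v.
Proof.
move=> M_le.
have row_le i : (v *m M^T) 0 i ^+ 2 <= sqenorm v * (n%:R * c ^+ 2).
  rewrite mxE (eq_bigr (fun j => v 0 j * M i j)) => [|j _]; last by rewrite mxE.
  apply: le_trans (cauchy_schwarz_sum _ _) _; apply: ler_wpM2l; first exact: sqenorm_ge0.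
  apply: le_trans (_ : _ <= \sum_(j < n) c ^+ 2) _.
    by apply: ler_sum => j _; rewrite -real_normK ?num_real // !expr2 ler_pM.
  by rewrite sumr_const card_ord mulr_natl.
apply: le_trans (_ : _ <= \sum_(i < n) sqenorm v * (n%:R * c ^+ 2)) _.
  by apply: ler_sum => i _; exact: row_le.
rewrite sumr_const card_ord -mulr_natl exprMn le_eqVlt; apply/orP; left; apply/eqP; ring.
Qed.

End SquaredNorm.

Section Derivatives.
Variable R : realType.

Lemma is_derive_coord m p (F : R -> 'M[R]_(m, p)) (dF : 'M[R]_(m, p)) (t : R) i j :
  is_derive t 1 F dF -> is_derive t 1 (fun y => F y i j) (dF i j).
Proof.
move=> [F_derivable <-].
(* [derivable F t 1] unfolds to the convergence of this difference quotient. *)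
have q_cvg : (fun h : R => h^-1 *: ((F \o shift t) (h *: 1) - F t)) @ 0^' --> 'D_1 F t.
  by [].
have coord_q_cvg : (fun h : R => h^-1 *: (((fun y => F y i j) \o shift t) (h *: 1)
    - F t i j)) @ 0^' --> 'D_1 F t i j.
  have -> : (fun h : R => h^-1 *: (((fun y => F y i j) \o shift t) (h *: 1) - F t i j))
      = (fun M : 'M[R]_(m, p) => M i j) \o (fun h : R => h^-1 *: ((F \o shift t) (h *: 1) - F t)).
    by apply/funext => h /=; rewrite !mxE.
  by apply: continuous_cvg => //; exact: coord_continuous.
by split; [apply/cvg_ex; exists ('D_1 F t i j) | apply: cvg_lim].
Qed.

Lemma is_derive_sqenorm n (G : R -> 'rV[R]_n) (dG : 'rV[R]_n) (t : R) :
  is_derive t 1 G dG -> is_derive t 1 (fun y => sqenorm (G y)) (2 * inner (G t) dG).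
Proof.
move=> G_dG.
have -> : (fun y => sqenorm (G y)) = \sum_(i < n) (fun y => G y 0 i * G y 0 i).
  by rewrite fct_sumE; apply/funext => y; apply: eq_bigr => i _; rewrite expr2.
apply: is_derive_eq.
  by apply: is_derive_sum => i; apply: is_deriveM; exact: is_derive_coord.
rewrite /inner mulr_sumr; apply: eq_bigr => i _ /=; rewrite /GRing.scale /=; ring.
Qed.

Lemma lipschitz_derive_coord_le n (g : 'rV[R]_n -> 'rV[R]_n) (L : R) x v i :
  (forall x y, enorm (g x - g y) <= L * enorm (x - y)) -> derivable g x v ->
  `|'D_v g x 0 i| <= L * enorm v.
Proof.
move=> g_lip g_derivable.
pose q (h : R) := h^-1 *: ((g \o shift x) (h *: v) - g x).
have q_cvg : q @ 0^' --> 'D_v g x by [].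
have coord_q_cvg : (fun h => q h 0 i) @ 0^' --> 'D_v g x 0 i.
  have -> : (fun h => q h 0 i) = (fun M : 'rV[R]_n => M 0 i) \o q by [].
  by apply: continuous_cvg => //; exact: coord_continuous.
apply: (closed_cvg _ (@closed_le _ (L * enorm v)) _ _ (cvg_norm coord_q_cvg)).
near=> h; have h_neq0 : h != 0 by near: h; exact: nbhs_dnbhs_neq.
apply: le_trans (normr_coord_le_enorm _ _) _; rewrite enormZ /=.
apply: le_trans (ler_wpM2l (normr_ge0 _) (g_lip _ _)) _.
by rewrite addrK enormZ normfV mulrCA mulKf ?normr_eq0.
Unshelve. all: by end_near.
Qed.

Lemma hess_coord_le n (f : 'rV[R]_n -> R) (L : R) x i j :
  (forall x, differentiable (grad f) x) ->
  (forall x y, enorm (grad f x - grad f y) <= L * enorm (x - y)) ->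
  `|hess f x i j| <= L.
Proof.
move=> grad_diff grad_lip; rewrite mxE -[L]mulr1 -(enorm_ebasis R j).
by apply: lipschitz_derive_coord_le => //; exact: diff_derivable.
Qed.

End Derivatives.

Section RealFunctions.
Variable R : realType.

Lemma gronwall (phi dphi : R -> R) (A c T : R) : 0 < A -> 0 <= c ->
  (forall t : R, is_derive t 1 phi (dphi t)) ->
  (forall t, 0 < t < T -> dphi t <= A * phi t + c) ->
  forall t, 0 <= t <= T -> phi t <= expR (A * t) * (phi 0 + c / A).
Proof.
move=> A_gt0 c_ge0 phi_dphi dphi_le t /andP[t_ge0 t_leT].
pose E y := expR (- (A * y)).
have E_dE (y : R) : is_derive y 1 E (E y * - A).
  apply: (is_derive1_comp (is_derive_expR _)).
  by apply: is_derive_eq; rewrite [_%:A]mulr1.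
pose psi y := E y * (phi y + c / A).
have psi_dpsi (y : R) : is_derive y 1 psi (E y * (dphi y - A * phi y - c)).
  have -> : psi = E * (fun y => phi y + c / A) by [].
  apply: is_derive_eq.
  rewrite /GRing.scale /= addr0; field; exact: lt0r_neq0.
have psi_cont : {within `[0, T], continuous psi}.
  by apply: derivable_within_continuous => y _; exact: ex_derive.
have psi_le : psi t <= psi 0.
  have zero_in : 0 \in `[0, T] by rewrite in_itv /= lexx (le_trans t_ge0 t_leT).
  have t_in : t \in `[0, T] by rewrite in_itv /= t_ge0 t_leT.
  apply: (ler0_derive1_le_cc _ _ psi_cont t_in zero_in t_ge0).
  - by move=> y _; exact: ex_derive.
  - move=> y; rewrite in_itv /= derive1E => y_in; have [_ ->] := psi_dpsi y.
    by apply: mulr_ge0_le0; [exact: ltW (expR_gt0 _) | have := dphi_le y y_in; lra].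
move: psi_le; rewrite /psi /E mulr0 oppr0 expR0 mul1r expRN mulrC ler_pdivrMr ?expR_gt0 //.
have : 0 <= c / A by apply: divr_ge0 => //; exact: ltW.
lra.
Qed.

Lemma derivable_itv_ubound (g : R -> R) (a b : R) : (forall t, derivable g t 1) ->
  exists B, forall t, a <= t <= b -> g t <= B.
Proof.
move=> g_derivable; have [ab|ba] := leP a b; last first.
  by exists 0 => t /andP[a_le b_ge]; have := le_trans a_le b_ge; rewrite leNgt ba.
have [c _ g_max] := EVT_max ab (derivable_within_continuous (fun t _ => g_derivable t)).
by exists (g c) => t t_ab; apply: g_max; rewrite in_itv.
Qed.

Lemma sup_cvg0_of_sqr_le (U : Type) (I : set U) (F : R -> U -> R) (M : R) :
  I !=set0 -> 0 <= M ->
  (forall s, 0 < s <= 1 -> forall t, I t -> 0 <= F s t /\ F s t ^+ 2 <= s * M) ->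
  (fun s => sup [set F s t | t in I]) @ 0^'+ --> 0.
Proof.
move=> [t0 It0] M_ge0 F_le; apply/cvgrPdist_le => eps eps_gt0.
have small_gt0 : 0 < eps ^+ 2 / (M + 1) by apply: divr_gt0; [exact: exprn_gt0 | lra].
near=> s.
have s01 : 0 < s <= 1.
  apply/andP; split; first by near: s; exact: nbhs_right_gt.
  by apply: ltW; near: s; exact: nbhs_right_lt ltr01.
have sM_le : s * M <= eps ^+ 2.
  have : s < eps ^+ 2 / (M + 1) by near: s; exact: nbhs_right_lt.
  rewrite ltr_pdivlMr; last lra.
  have : s * M <= s * (M + 1) by apply: ler_wpM2l; [case/andP: s01 => /ltW | lra].
  lra.
have F_le_eps t : I t -> F s t <= eps.
  move=> It; have [F_ge0 F_sqr] := F_le s s01 t It.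
  by rewrite -ler_sqr ?nnegrE ?(ltW eps_gt0) //; exact: le_trans sM_le.
have sup_ge0 : 0 <= sup [set F s t | t in I].
  have [F0_ge0 _] := F_le s s01 t0 It0.
  apply: le_trans F0_ge0 (sup_upper_bound _ _); last by exists t0.
  by split; [exists (F s t0), t0 | exists eps => _ [t It <-]; exact: F_le_eps].
rewrite sub0r normrN ger0_norm //; apply: ge_sup; first by exists (F s t0), t0.
by move=> _ [t It <-]; exact: F_le_eps.
Unshelve. all: by end_near.
Qed.

End RealFunctions.

Lemma second_order_ode_sub (R : realFieldType) m p (a b r : R)
    (y'' y' h gy x'' x' gx : 'M[R]_(m, p)) :
  y'' + a *: y' + b *: h + (1 + r) *: gy = 0 -> x'' + a *: x' + gx = 0 ->
  y'' - x'' = - (a *: (y' - x') + (gy - gx)) - (b *: h + r *: gy).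
Proof.
move=> eq_y eq_x; apply/matrixP => i j.
by move/matrixP/(_ i j): eq_y; move/matrixP/(_ i j): eq_x; rewrite !mxE; lra.
Qed.

Section HighResolutionError.
Variables (R : realType) (n : nat) (mu L beta B T : R) (x0 : 'rV[R]_n).
Variables (f : 'rV[R]_n -> R) (X : R -> 'rV[R]_n).
Hypotheses (mu_gt0 : 0 < mu) (L_ge0 : 0 <= L) (beta01 : 0 <= beta <= 1) (T_ge0 : 0 <= T).
Hypothesis grad_diff : forall x, differentiable (grad f) x.
Hypothesis grad_lip : forall x y, enorm (grad f x - grad f y) <= L * enorm (x - y).
Hypotheses (dX : forall t, derivable X t 1) (ddX : forall t, derivable (derive1 X) t 1).
Hypothesis odeX : forall t, 0 <= t ->
  derive1 (derive1 X) t + (2 * Num.sqrt mu) *: derive1 X t + grad f (X t) = 0.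
Hypotheses (X0 : X 0 = x0) (dX0 : derive1 X 0 = 0).
Hypothesis low_res_bound : forall t, 0 <= t <= T ->
  sqenorm (derive1 X t) + sqenorm (grad f (X t)) <= B.

Definition hr_accel_rate : R :=
  16 * mu + 8 * (n%:R * L) ^+ 2 + 4 * L ^+ 2 + 8 * mu * L ^+ 2.
Definition hr_accel_forcing : R := 8 * B * ((n%:R * L) ^+ 2 + mu).
Definition hr_error_bound : R := expR ((hr_accel_rate + 2) * T) *
  (4 * sqenorm (grad f x0) + hr_accel_forcing / (hr_accel_rate + 2)).

Let vel_bound t : 0 <= t <= T -> sqenorm (derive1 X t) <= B.
Proof. by move=> /low_res_bound; have := sqenorm_ge0 (grad f (X t)); lra. Qed.

Let grad_bound t : 0 <= t <= T -> sqenorm (grad f (X t)) <= B.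
Proof. by move=> /low_res_bound; have := sqenorm_ge0 (derive1 X t); lra. Qed.

Let B_ge0 : 0 <= B.
Proof. by apply: le_trans (sqenorm_ge0 (derive1 X 0)) (vel_bound _); rewrite lexx T_ge0. Qed.

Let accel_rate_ge0 : 0 <= hr_accel_rate.
Proof.
rewrite /hr_accel_rate; have mu_ge0 := ltW mu_gt0.
by do !apply: addr_ge0; do ?apply: mulr_ge0 => //; exact: sqr_ge0.
Qed.

Let accel_rate_gt0 : 0 < hr_accel_rate + 2.
Proof. by have := accel_rate_ge0; lra. Qed.

Let accel_forcing_ge0 : 0 <= hr_accel_forcing.
Proof.
by apply: mulr_ge0; [exact: mulr_ge0 | apply: addr_ge0; [exact: sqr_ge0 | exact: ltW]].
Qed.

Lemma hr_error_bound_ge0 : 0 <= hr_error_bound.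
Proof.
apply: mulr_ge0; first exact: ltW (expR_gt0 _).
apply: addr_ge0; first exact: mulr_ge0 (sqenorm_ge0 _).
exact: divr_ge0 accel_forcing_ge0 (ltW accel_rate_gt0).
Qed.

Section FixedStep.
Variables (s : R) (Y : R -> 'rV[R]_n).
Hypotheses (s_gt0 : 0 < s) (s_le1 : s <= 1).
Hypotheses (dY : forall t, derivable Y t 1) (ddY : forall t, derivable (derive1 Y) t 1).
Hypothesis odeY : forall t, 0 <= t ->
  derive1 (derive1 Y) t + (2 * Num.sqrt mu) *: derive1 Y t
  + (beta * Num.sqrt s) *: (derive1 Y t *m (hess f (Y t))^T)
  + (1 + Num.sqrt (mu * s)) *: grad f (Y t) = 0.
Hypotheses (Y0 : Y 0 = x0)
  (dY0 : derive1 Y 0 = - ((2 * Num.sqrt s) / (1 + Num.sqrt (mu * s))) *: grad f x0).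

Let e t := Y t - X t.
Let d t := derive1 Y t - derive1 X t.
Let dd t := derive1 (derive1 Y) t - derive1 (derive1 X) t.

Lemma hess_damping_sqenorm_le t : 0 <= t <= T ->
  sqenorm ((beta * Num.sqrt s) *: (derive1 Y t *m (hess f (Y t))^T))
  <= 2 * s * (n%:R * L) ^+ 2 * (sqenorm (d t) + B).
Proof.
move=> tT; rewrite sqenormZ exprMn sqr_sqrtr ?(ltW s_gt0) // -mulrA.
set YH := derive1 Y t *m _; set c := (n%:R * L) ^+ 2.
have hess_le i j : `|hess f (Y t) i j| <= L by exact: hess_coord_le.
have YH_le : sqenorm YH <= c * sqenorm (derive1 Y t) := sqenorm_mulmx_tr_le _ hess_le.
have vel_le : sqenorm (derive1 Y t) <= 2 * sqenorm (d t) + 2 * B.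
  have := sqenormD_le (d t) (derive1 X t); rewrite /d subrK.
  by have := vel_bound tT; lra.
have beta2_le1 : beta ^+ 2 <= 1 by case/andP: beta01 => *; exact: exprn_ile1.
have s_ge0 := ltW s_gt0; have c_ge0 : 0 <= c := sqr_ge0 _.
have := ler_piMl (mulr_ge0 s_ge0 (sqenorm_ge0 YH)) beta2_le1.
have := ler_wpM2l s_ge0 YH_le; have := ler_wpM2l s_ge0 (ler_wpM2l c_ge0 vel_le).
lra.
Qed.

Lemma grad_forcing_sqenorm_le t : 0 <= t <= T ->
  sqenorm (Num.sqrt (mu * s) *: grad f (Y t))
  <= 2 * mu * s * (L ^+ 2 * sqenorm (e t) + B).
Proof.
move=> tT; rewrite sqenormZ sqr_sqrtr; last exact: mulr_ge0 (ltW mu_gt0) (ltW s_gt0).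
have grad_err := sqenorm_le_of_enorm_le L_ge0 (grad_lip (Y t) (X t)).
have := sqenormD_le (grad f (Y t) - grad f (X t)) (grad f (X t)); rewrite subrK.
have := grad_bound tT; rewrite -/(e t) in grad_err => gX_le gY_le.
have : sqenorm (grad f (Y t)) <= 2 * (L ^+ 2 * sqenorm (e t) + B) by lra.
move/(ler_wpM2l (mulr_ge0 (ltW mu_gt0) (ltW s_gt0))); lra.
Qed.

Lemma accel_error_sqenorm_le t : 0 <= t <= T ->
  sqenorm (dd t) <= hr_accel_rate * (sqenorm (e t) + sqenorm (d t)) + s * hr_accel_forcing.
Proof.
move=> tT; have /andP[t_ge0 _] := tT.
rewrite /dd (second_order_ode_sub (odeY t_ge0) (odeX t_ge0)) -/(d t).
set D := (beta * Num.sqrt s) *: _; set G := Num.sqrt (mu * s) *: _.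
have := sqenormD_le (- ((2 * Num.sqrt mu) *: d t + (grad f (Y t) - grad f (X t)))) (- (D + G)).
rewrite !sqenormN => dd_le.
have := sqenormD_le ((2 * Num.sqrt mu) *: d t) (grad f (Y t) - grad f (X t)).
rewrite sqenormZ exprMn sqr_sqrtr ?(ltW mu_gt0) // => P_le.
have grad_err := sqenorm_le_of_enorm_le L_ge0 (grad_lip (Y t) (X t)).
have DG_le := sqenormD_le D G.
have D_le := hess_damping_sqenorm_le tT; have G_le := grad_forcing_sqenorm_le tT.
rewrite -/(e t) /hr_accel_rate /hr_accel_forcing in grad_err *.
set E := sqenorm (e t) in grad_err G_le *; set Dn := sqenorm (d t) in P_le D_le *.
set c := (n%:R * L) ^+ 2 in D_le *; set l := L ^+ 2 in grad_err G_le *.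
have E_ge0 : 0 <= E := sqenorm_ge0 _; have Dn_ge0 : 0 <= Dn := sqenorm_ge0 _.
have c_ge0 : 0 <= c := sqr_ge0 _; have l_ge0 : 0 <= l := sqr_ge0 _.
have mu_ge0 := ltW mu_gt0.
have := ler_piMl (mulr_ge0 c_ge0 Dn_ge0) s_le1.
have := ler_piMl (mulr_ge0 (mulr_ge0 mu_ge0 l_ge0) E_ge0) s_le1.
have := mulr_ge0 mu_ge0 E_ge0; have := mulr_ge0 c_ge0 E_ge0.
have := mulr_ge0 l_ge0 Dn_ge0; have := mulr_ge0 (mulr_ge0 mu_ge0 l_ge0) Dn_ge0.
lra.
Qed.

Lemma error_energy_is_derive (t : R) : is_derive t 1 (fun y => sqenorm (e y) + sqenorm (d y))
  (2 * inner (e t) (d t) + 2 * inner (d t) (dd t)).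
Proof.
have derive1P (F : R -> 'rV[R]_n) : derivable F t 1 -> is_derive t 1 F (derive1 F t).
  by move=> /derivableP; rewrite derive1E.
apply: is_deriveD; apply: is_derive_sqenorm; apply: is_deriveB; exact: derive1P.
Qed.

Lemma error_energy_rate_le t : 0 < t < T ->
  2 * inner (e t) (d t) + 2 * inner (d t) (dd t)
  <= (hr_accel_rate + 2) * (sqenorm (e t) + sqenorm (d t)) + s * hr_accel_forcing.
Proof.
move=> /andP[t_gt0 t_ltT]; have tT : 0 <= t <= T by rewrite !ltW.
have := dbl_inner_le (e t) (d t); have := dbl_inner_le (d t) (dd t).
have := accel_error_sqenorm_le tT; have := sqenorm_ge0 (e t).
(* Generalizing keeps lra from unfolding derive1 when comparing atoms. *)
move: (inner (e t) (d t)) (inner (d t) (dd t)) (sqenorm (e t)) (sqenorm (d t)) (sqenorm (dd t)).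
by move=> ed ddd E Dn DD; lra.
Qed.

Lemma initial_error_energy_le :
  sqenorm (e 0) + sqenorm (d 0) <= 4 * s * sqenorm (grad f x0).
Proof.
rewrite /e /d Y0 X0 dY0 dX0 subrr subr0 sqenorm0 add0r sqenormZ sqrrN.
apply: ler_wpM2r; first exact: sqenorm_ge0.
have -> : 4 * s = (2 * Num.sqrt s) ^+ 2 by rewrite exprMn sqr_sqrtr ?(ltW s_gt0) //; ring.
have sqrt_ge0 := sqrtr_ge0 s; have r_ge0 := sqrtr_ge0 (mu * s).
rewrite ler_sqr ?nnegrE ?mulr_ge0 ?divr_ge0 ?addr_ge0 //.
by rewrite ler_pdivrMr ?ler_peMr ?mulr_ge0 //; lra.
Qed.

Lemma error_sqenorm_le t : 0 <= t <= T -> sqenorm (Y t - X t) <= s * hr_error_bound.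
Proof.
move=> tT; have /andP[_ t_leT] := tT.
set A := hr_accel_rate + 2; set c := s * hr_accel_forcing.
have c_ge0 : 0 <= c := mulr_ge0 (ltW s_gt0) accel_forcing_ge0.
have cA_ge0 : 0 <= c / A := divr_ge0 c_ge0 (ltW accel_rate_gt0).
have /= energy_le := gronwall accel_rate_gt0 c_ge0 error_energy_is_derive error_energy_rate_le tT.
have exp_le : expR (A * t) <= expR (A * T) by rewrite ler_expR ler_wpM2l // ltW.
have energy0_ge0 : 0 <= sqenorm (e 0) + sqenorm (d 0) + c / A.
  by rewrite !addr_ge0 ?sqenorm_ge0.
have := ler_pM (ltW (expR_gt0 _)) energy0_ge0 exp_le
  (lerD initial_error_energy_le (lexx (c / A))).
have -> : s * hr_error_bound = expR (A * T) * (4 * s * sqenorm (grad f x0) + c / A).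
  by rewrite /hr_error_bound -/A /c; ring.
apply: le_trans; apply: le_trans energy_le.
by rewrite -/(e t) lerDl sqenorm_ge0.
Qed.

End FixedStep.
End HighResolutionError.

Theorem lemma3p4 (R : realType) (n : nat) (mu L beta : R) (x0 : 'rV[R]_n)
  (f : 'rV[R]_n -> R)
  (Xs : R -> R -> 'rV[R]_n) (X : R -> 'rV[R]_n) :
  0 < mu -> mu <= L -> 0 <= beta <= 1 ->
  S2 mu L f ->
  (* X_s solves the beta-high-resolution ODE, for every s > 0 *)
  (forall s, 0 < s ->
     [/\ (forall t, derivable (Xs s) t 1),
         (forall t, derivable (derive1 (Xs s)) t 1),
         (forall t, 0 <= t ->
            derive1 (derive1 (Xs s)) t + (2 * Num.sqrt mu) *: derive1 (Xs s) t
            + (beta * Num.sqrt s) *: (derive1 (Xs s) t *m (hess f (Xs s t))^T)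
            + (1 + Num.sqrt (mu * s)) *: grad f (Xs s t) = 0),
         Xs s 0 = x0 &
         derive1 (Xs s) 0 = - ((2 * Num.sqrt s) / (1 + Num.sqrt (mu * s))) *: grad f x0]) ->
  (* X solves the low-resolution ODE *)
  [/\ (forall t, derivable X t 1),
      (forall t, derivable (derive1 X) t 1),
      (forall t, 0 <= t ->
         derive1 (derive1 X) t + (2 * Num.sqrt mu) *: derive1 X t + grad f (X t) = 0),
      X 0 = x0 &
      derive1 X 0 = 0] ->
  forall T : R, 0 < T ->
    (fun s => sup [set enorm (Xs s t - X t) | t in `[0, T]]) @ 0^'+ --> 0.
Proof.
move=> mu_gt0 muL beta01 [_ grad_diff _ grad_lip _] HXs [dX ddX odeX X0 dX0] T T_gt0.
have L_ge0 : 0 <= L := le_trans (ltW mu_gt0) muL.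
have T_ge0 := ltW T_gt0.
have dgX (t : R) : derivable (grad f \o X) t 1.
  by apply/derivable1_diffP/differentiable_comp; [exact/derivable1_diffP | exact: grad_diff].
have [B low_res_bound] : exists B, forall t, 0 <= t <= T ->
    sqenorm (derive1 X t) + sqenorm (grad f (X t)) <= B.
  apply: derivable_itv_ubound => t; apply: ex_derive.
  by apply: is_deriveD; apply: is_derive_sqenorm; exact: derivableP.
apply: (@sup_cvg0_of_sqr_le _ _ `[0, T] (fun s t => enorm (Xs s t - X t))
  (hr_error_bound mu L B T x0 f)).
- by exists 0; rewrite /= in_itv /= lexx.
- exact: (hr_error_bound_ge0 x0 mu_gt0 L_ge0 T_ge0 low_res_bound).
move=> s /andP[s_gt0 s_le1] t tT; have [dY ddY odeY Y0 dY0] := HXs s s_gt0.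
split; first exact: sqrtr_ge0.
by rewrite enorm_sqr; apply: (error_sqenorm_le (beta := beta)).
Qed.
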